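(* Let $H\subset\mathbb{R}^n$ be a smooth bounded domain, $c\in L^\infty(H)$, and let $u\in C^2(H)\cap C(\overline H)$ satisfy $D_{H,\varphi}u+c(x)u\ge0$ in $H$, $u\ge0$ in $H$, and $u=\varphi$ on $\partial H$, where $\varphi\ge0$ on $\partial H$. Then either $u>0$ in $H$ or $u\equiv0$ in $H$.
   Context: For an open set $H\subset\mathbb{R}^n$, a function $\varphi$ on $\partial H$ and $u$ on $\overline H$ with $u=\varphi$ on $\partial H$, let $v$ be the bounded harmonic function in $\Omega=H\times(0,\infty)$, continuous up to the boundary, with $v(x,0)=u(x)$ for $x\in H$ and $v(x,\lambda)=\varphi(x)$ on $\partial H\times[0,\infty)$. Define $D_{H,\varphi}u(x):=-\partial_\lambda v(x,0)$ for $x\in H$. *)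

From Stdlib Require Import Reals.
From mathcomp Require Import all_boot.
Set Implicit Arguments. Unset Strict Implicit. Unset Printing Implicit Defensive.
Open Scope R_scope.

Definition Rn (n : nat) := 'I_n -> R.

Definition vsub n (x y : Rn n) : Rn n := fun i => x i - y i.
Definition norm n (x : Rn n) : R := sqrt (\big[Rplus/0]_(i < n) (x i * x i)).
Definition dist n (x y : Rn n) : R := norm (vsub x y).

Definition shift n (x : Rn n) (i : 'I_n) (t : R) : Rn n :=
  fun j => if j == i then x j + t else x j.

(* the point (x, l) of R^(n+1), last coordinate l *)
Definition ext n (x : Rn n) (l : R) : Rn n.+1 :=
  fun j => match unlift ord_max j with Some i => x i | None => l end.

Section Topo.
Variable n : nat.
Implicit Types (S U : Rn n -> Prop) (f : Rn n -> R).

Definition is_open U := forall x, U x -> exists r, 0 < r /\ forall y, dist x y < r -> U y.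
Definition clos S (x : Rn n) := forall r, 0 < r -> exists y, S y /\ dist x y < r.
Definition boundary S (x : Rn n) := clos S x /\ ~ S x.
Definition bounded S := exists M, forall x, S x -> norm x <= M.
Definition connected S := forall U V, is_open U -> is_open V ->
  (forall x, S x -> U x \/ V x) -> (forall x, S x -> U x -> V x -> False) ->
  (forall x, S x -> U x) \/ (forall x, S x -> V x).

Definition cont_on S f := forall x, S x -> forall eps, 0 < eps ->
  exists delta, 0 < delta /\ forall y, S y -> dist x y < delta -> Rabs (f y - f x) < eps.

Definition pderiv_at f (i : 'I_n) (x : Rn n) (l : R) :=
  derivable_pt_lim (fun t => f (shift x i t)) 0 l.

Definition C2_on U f (d1 : 'I_n -> Rn n -> R) (d2 : 'I_n -> 'I_n -> Rn n -> R) :=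
  cont_on U f /\
  (forall i x, U x -> pderiv_at f i x (d1 i x)) /\
  (forall i, cont_on U (d1 i)) /\
  (forall i j x, U x -> pderiv_at (d1 i) j x (d2 i j x)) /\
  (forall i j, cont_on U (d2 i j)).

Definition C2 U f := exists d1 d2, C2_on U f d1 d2.

Fixpoint Ck (k : nat) f : Prop :=
  match k with
  | O => cont_on (fun _ => True) f
  | S k => cont_on (fun _ => True) f /\
           forall i, exists g, (forall x, pderiv_at f i x (g x)) /\ Ck k g
  end.
Definition smooth f := forall k, Ck k f.

(* smooth bounded domain: nonempty, open, connected, bounded, and C^infty boundary,
   i.e. locally H = {rho < 0} with rho smooth and grad rho <> 0 on {rho = 0}. *)
Definition smooth_bounded_domain S :=
  (exists x, S x) /\ is_open S /\ connected S /\ bounded S /\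
  forall p, boundary S p -> exists r rho, 0 < r /\ smooth rho /\
    (forall x, dist p x < r -> (S x <-> rho x < 0)) /\
    (forall x, dist p x < r -> rho x = 0 ->
        exists i l, pderiv_at rho i x l /\ l <> 0).

Definition harmonic_on U f := exists d1 d2, C2_on U f d1 d2 /\
  forall x, U x -> \big[Rplus/0]_(i < n) d2 i i x = 0.
End Topo.

Definition cyl n (H : Rn n -> Prop) (y : Rn n.+1) : Prop :=
  exists x l, y = ext x l /\ H x /\ 0 < l.

Definition harm_ext n (H : Rn n -> Prop) (phi u : Rn n -> R) (v : Rn n.+1 -> R) :=
  harmonic_on (cyl H) v /\
  (exists M, forall y, cyl H y -> Rabs (v y) <= M) /\
  cont_on (clos (cyl H)) v /\
  (forall x, H x -> v (ext x 0) = u x) /\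
  (forall x l, boundary H x -> 0 <= l -> v (ext x l) = phi x).

Definition dlam0 n (v : Rn n.+1 -> R) (x : Rn n) (L : R) :=
  forall eps, 0 < eps -> exists delta, 0 < delta /\ forall h, 0 < h < delta ->
    Rabs ((v (ext x h) - v (ext x 0)) / h - L) < eps.

(* D_{H,phi} u (x) = d : there is the harmonic extension v and -d_l v(x,0) = d *)
Definition DN n (H : Rn n -> Prop) (phi u : Rn n -> R) (x : Rn n) (d : R) :=
  exists v, harm_ext H phi u v /\ dlam0 v x (- d).

(* Let Z = {x in H | u x = 0}.  The set {u > 0} is open by continuity,
   and Z is open: at x0 in Z the hypothesis gives d_lambda v(x0, 0) <= 0.
   By the weak maximum principle in the cylinder, v >= 0.  If v(x0, t) > 0 for
   some small t > 0, Hopf's lemma on the ball of radius t around (x0, t)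
   would give v(x0, h) >= kappa h, contradicting d_lambda v(x0, 0) <= 0; so v
   vanishes on a vertical segment above x0.  The strong minimum principle then
   spreads the zeros of v to the column above a neighbourhood of x0, and
   u = v(., 0) vanishes there by continuity.  As H is connected, u > 0 on H
   or u = 0 on H. *)

From Pilot Require Import Defs.
From Stdlib Require Import Reals Lra Psatz Classical ClassicalEpsilon FunctionalExtensionality.
From mathcomp Require Import all_boot.
From HB Require Import structures.
From Coquelicot Require Import Coquelicot.
Import Defs. (* norm, dist, ..., not Coquelicot's homonyms *)
Set Implicit Arguments. Unset Strict Implicit. Unset Printing Implicit Defensive.
Open Scope R_scope.

HB.instance Definition _ := Monoid.isComLaw.Build R 0 Rplus
  (fun a b c => esym (Rplus_assoc a b c)) Rplus_comm Rplus_0_l.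

Notation sumR n F := (\big[Rplus/0]_(i < n) F i).

Lemma sum_ge0 n (F : 'I_n -> R) : (forall i, 0 <= F i) -> 0 <= sumR n F.
Proof. by move=> F0; apply: (big_ind (fun x => 0 <= x)) => //; [lra | move=> *; lra]. Qed.

Lemma sum_le n (F G : 'I_n -> R) : (forall i, F i <= G i) -> sumR n F <= sumR n G.
Proof. by move=> FG; apply: (big_ind2 (fun x y => x <= y)) => //; [lra | move=> *; lra]. Qed.

Lemma sum_plus n (F G : 'I_n -> R) :
  sumR n (fun i => F i + G i) = sumR n F + sumR n G.
Proof. exact: big_split. Qed.

Lemma sum_scal n a (F : 'I_n -> R) : sumR n (fun i => a * F i) = a * sumR n F.
Proof. by elim/big_rec2: _ => [|i x y _ ->]; ring. Qed.

Lemma sum_const n a : sumR n (fun _ => a) = INR n * a.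
Proof.
elim: n => [|n IH]; first by rewrite big_ord0 /=; ring.
by rewrite S_INR big_ord_recr /= IH; ring.
Qed.

Lemma sum_term n (F : 'I_n -> R) i : (forall j, 0 <= F j) -> F i <= sumR n F.
Proof.
move=> F0; rewrite (bigD1 i) //=.
rewrite -{1}(Rplus_0_r (F i)); apply: Rplus_le_compat_l.
by elim/big_rec: _ => [|j x _ hx]; [lra | have := F0 j; lra].
Qed.

Lemma sum_last n (F : 'I_n.+1 -> R) :
  sumR n.+1 F = sumR n (fun i => F (lift ord_max i)) + F ord_max.
Proof.
rewrite big_ord_recr /=; congr (_ + _); apply: eq_bigr => i _.
by congr F; apply: val_inj => /=; rewrite /bump leqNgt ltn_ord.
Qed.

(* Cauchy-Schwarz inequality, from the nonnegativity of the quadratic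
   t |-> sum (a_i t + b_i)^2. *)
Lemma cauchy_schwarz n (a b : 'I_n -> R) :
  sumR n (fun i => a i * b i) * sumR n (fun i => a i * b i) <=
  sumR n (fun i => a i * a i) * sumR n (fun i => b i * b i).
Proof.
set A := sumR n (fun i => a i * a i); set B := sumR n (fun i => a i * b i).
set C := sumR n (fun i => b i * b i).
have quad t : 0 <= A * t * t + 2 * B * t + C.
  have -> : A * t * t + 2 * B * t + C =
            sumR n (fun i => (a i * t + b i) * (a i * t + b i)).
    rewrite (eq_bigr (fun i => t * t * (a i * a i) + (2 * t * (a i * b i) + b i * b i)));
      last by move=> i _; ring.
    by rewrite !sum_plus !sum_scal /A /B /C; ring.
  by apply: sum_ge0 => i; apply: Rle_0_sqr.
have A0 : 0 <= A by apply: sum_ge0 => i; apply: Rle_0_sqr.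
case: (Rle_lt_or_eq_dec 0 A A0) => [Apos | A0'].
  have := quad (- B / A).
  have -> : A * (- B / A) * (- B / A) + 2 * B * (- B / A) + C = (A * C - B * B) / A
    by field; lra.
  move=> h; have : 0 <= (A * C - B * B) / A * A by nra.
  by rewrite /Rdiv Rmult_assoc Rinv_l; lra.
have B0 : B = 0.
  apply: NNPP => Bn0; have := quad (- (C + 1) / (2 * B)).
  rewrite -A0'; have -> : 0 * (- (C + 1) / (2 * B)) * (- (C + 1) / (2 * B)) +
                           2 * B * (- (C + 1) / (2 * B)) + C = -1 by field; lra.
  lra.
rewrite B0 -A0'; lra.
Qed.

Lemma minkowski n (a b : 'I_n -> R) :
  sqrt (sumR n (fun i => (a i + b i) * (a i + b i))) <=
  sqrt (sumR n (fun i => a i * a i)) + sqrt (sumR n (fun i => b i * b i)).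
Proof.
have S0 : 0 <= sumR n (fun i => (a i + b i) * (a i + b i))
  by apply: sum_ge0 => i; apply: Rle_0_sqr.
have E : sumR n (fun i => (a i + b i) * (a i + b i)) =
  sumR n (fun i => a i * a i) + 2 * sumR n (fun i => a i * b i) + sumR n (fun i => b i * b i).
  rewrite (eq_bigr (fun i => a i * a i + (2 * (a i * b i) + b i * b i)));
    last by move=> i _; ring.
  by rewrite !sum_plus sum_scal; ring.
rewrite E in S0 *.
have CS := cauchy_schwarz a b.
have A0 : 0 <= sumR n (fun i => a i * a i) by apply: sum_ge0 => i; apply: Rle_0_sqr.
have C0 : 0 <= sumR n (fun i => b i * b i) by apply: sum_ge0 => i; apply: Rle_0_sqr.
move: S0 CS A0 C0.
move: (sumR n (fun i => a i * a i)) (sumR n (fun i => a i * b i)) (sumR n (fun i => b i * b i)).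
move=> A B C S0 CS A0 C0.
have sA := sqrt_sqrt A A0; have sC := sqrt_sqrt C C0.
have pA := sqrt_pos A; have pC := sqrt_pos C.
have BAC : B <= sqrt A * sqrt C.
  have : B * B <= (sqrt A * sqrt C) * (sqrt A * sqrt C) by nra.
  have : 0 <= sqrt A * sqrt C by nra.
  nra.
apply: Rsqr_incr_0_var; last lra.
by rewrite /Rsqr sqrt_sqrt //; nra.
Qed.

Definition dist2 n (x y : Rn n) : R := sumR n (fun i => (x i - y i) * (x i - y i)).

Section Euclid.
Variable n : nat.
Implicit Types x y z : Rn n.

Lemma dist2_ge0 x y : 0 <= dist2 x y.
Proof. by apply: sum_ge0 => i; apply: Rle_0_sqr. Qed.

Lemma dist_sqr x y : dist x y * dist x y = dist2 x y.
Proof. exact: sqrt_sqrt (dist2_ge0 x y). Qed.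

Lemma dist_ge0 x y : 0 <= dist x y.
Proof. exact: sqrt_pos. Qed.

Lemma dist2_refl x : dist2 x x = 0.
Proof.
rewrite /dist2 (eq_bigr (fun _ => 0)) ?sum_const; first ring.
by move=> i _; ring.
Qed.

Lemma dist_refl x : dist x x = 0.
Proof. by rewrite /dist /norm -/(dist2 x x) dist2_refl sqrt_0. Qed.

Lemma dist_sym x y : dist x y = dist y x.
Proof. by rewrite /dist /norm /vsub; f_equal; apply: eq_bigr => i _; ring. Qed.

Lemma dist_tri x y z : dist x z <= dist x y + dist y z.
Proof.
have := minkowski (fun i => x i - y i) (fun i => y i - z i).
by rewrite (eq_bigr (fun i => (x i - z i) * (x i - z i))) // => i _; ring.
Qed.

Lemma norm_ge0 x : 0 <= norm x.
Proof. exact: sqrt_pos. Qed.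

Lemma coord_le_norm x i : Rabs (x i) <= norm x.
Proof.
rewrite /norm -sqrt_Rsqr_abs; apply: sqrt_le_1_alt.
by apply: (sum_term (F := fun i => x i * x i)) => j; apply: Rle_0_sqr.
Qed.

Lemma coord_le_dist x y i : Rabs (x i - y i) <= dist x y.
Proof. exact: (coord_le_norm (vsub x y) i). Qed.

Lemma norm_le_dist x y : norm x <= norm y + dist x y.
Proof.
have := minkowski y (fun i => x i - y i).
by rewrite (eq_bigr (fun i => x i * x i)) // => i _; ring.
Qed.

Lemma shift_shift x i t s : shift (shift x i t) i s = shift x i (t + s).
Proof. by apply: functional_extensionality => j; rewrite /shift; case: (j == i); ring. Qed.

Lemma shift0 x i : shift x i 0 = x.
Proof. by apply: functional_extensionality => j; rewrite /shift; case: (j == i); ring. Qed.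

Lemma shift_at x i t : shift x i t i = x i + t.
Proof. by rewrite /shift eqxx. Qed.

Lemma dist2_shift x z i t :
  dist2 (shift x i t) z = dist2 x z + 2 * t * (x i - z i) + t * t.
Proof.
rewrite /dist2 (bigD1 i) //= [in RHS](bigD1 i) //= shift_at.
rewrite (eq_bigr (fun j => (x j - z j) * (x j - z j))); first ring.
by move=> j /negbTE ji; rewrite /shift ji.
Qed.

Lemma dist_shift x i t : dist x (shift x i t) = Rabs t.
Proof.
rewrite dist_sym /dist /norm -/(dist2 _ _) dist2_shift dist2_refl -sqrt_Rsqr_abs /Rsqr.
by f_equal; ring.
Qed.

Lemma clos_self (S : Rn n -> Prop) x : S x -> clos S x.
Proof. by move=> Sx r r0; exists x; rewrite dist_refl. Qed.

Lemma clos_mono (S T : Rn n -> Prop) x : (forall y, S y -> T y) -> clos S x -> clos T x.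
Proof. by move=> ST cx r r0; case: (cx r r0) => y [Sy d]; exists y; split => //; apply: ST. Qed.

Lemma clos_clos (S : Rn n -> Prop) x : clos (clos S) x -> clos S x.
Proof.
move=> cx r r0; case: (cx (r / 2)) => [|y [cy d]]; first lra.
case: (cy (r / 2)) => [|z [Sz d']]; first lra.
by exists z; split => //; have := dist_tri x y z; lra.
Qed.

Lemma cont_on_sub (S T : Rn n -> Prop) f : cont_on T f -> (forall y, S y -> T y) -> cont_on S f.
Proof.
move=> cf ST x Sx e e0; case: (cf x (ST x Sx) e e0) => d [d0 hd].
by exists d; split => // y Sy; apply: hd (ST y Sy).
Qed.
End Euclid.

Section Product.
Variable n : nat.
Implicit Types (x : Rn n) (y : Rn n.+1).

Definition proj y : Rn n := fun i => y (lift ord_max i).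

Lemma ext_last x l : ext x l ord_max = l.
Proof. by rewrite /ext unlift_none. Qed.

Lemma ext_lift x l i : ext x l (lift ord_max i) = x i.
Proof. by rewrite /ext liftK. Qed.

Lemma ext_proj y : ext (proj y) (y ord_max) = y.
Proof.
by apply: functional_extensionality => j; rewrite /ext /proj; case: unliftP => [j' ->|->].
Qed.

Lemma ext_inj x x' l l' : ext x l = ext x' l' -> x = x' /\ l = l'.
Proof.
move=> E; split; last by rewrite -(ext_last x l) -(ext_last x' l') E.
by apply: functional_extensionality => i; rewrite -(ext_lift x l i) -(ext_lift x' l' i) E.
Qed.

Lemma dist2_ext x x' l l' : dist2 (ext x l) (ext x' l') = dist2 x x' + (l - l') * (l - l').
Proof.
rewrite /dist2 sum_last !ext_last; congr (_ + _).
by apply: eq_bigr => i _; rewrite !ext_lift.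
Qed.

Lemma dist_ext_base x x' l l' : dist x x' <= dist (ext x l) (ext x' l').
Proof.
rewrite /dist /norm -!/(dist2 _ _) dist2_ext; apply: sqrt_le_1_alt.
by have := Rle_0_sqr (l - l'); rewrite /Rsqr; lra.
Qed.

Lemma dist_ext_height x x' l l' : Rabs (l - l') <= dist (ext x l) (ext x' l').
Proof. by have := coord_le_dist (ext x l) (ext x' l') ord_max; rewrite !ext_last. Qed.

Lemma dist_ext_vert x l l' : dist (ext x l) (ext x l') = Rabs (l - l').
Proof.
rewrite /dist /norm -/(dist2 _ _) dist2_ext dist2_refl Rplus_0_l.
by rewrite -sqrt_Rsqr_abs.
Qed.

Lemma dist_ext_horiz x x' l : dist (ext x l) (ext x' l) = dist x x'.
Proof. by rewrite /dist /norm -!/(dist2 _ _) dist2_ext; f_equal; ring. Qed.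

Lemma cyl_ext (H : Rn n -> Prop) x l : cyl H (ext x l) <-> H x /\ 0 < l.
Proof.
split; last by case=> Hx l0; exists x, l.
by case=> x' [l' [E [Hx l0]]]; case: (ext_inj E) => -> ->.
Qed.

Lemma clos_cyl_ext (H : Rn n -> Prop) x l : H x -> 0 <= l -> clos (cyl H) (ext x l).
Proof.
move=> Hx l0 r r0; exists (ext x (l + r / 2)); split; first by apply/cyl_ext; split => //; lra.
by rewrite dist_ext_vert Rabs_left; lra.
Qed.

Lemma clos_cyl_inv (H : Rn n -> Prop) x l : clos (cyl H) (ext x l) -> clos H x /\ 0 <= l.
Proof.
move=> cxl; split.
  move=> r r0; case: (cxl r r0) => y [[x' [l' [-> [Hx' _]]]] d].
  by exists x'; split => //; have := dist_ext_base x x' l l'; lra.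
apply: Rnot_lt_le => l_neg.
case: (cxl (- l)) => [|y [[x' [l' [-> [_ l'0]]]] d]]; first lra.
by have := dist_ext_height x x' l l'; rewrite Rabs_left; lra.
Qed.
End Product.

Definition converges (u : nat -> R) l :=
  forall e, 0 < e -> exists K, forall k, (K <= k)%nat -> Rabs (u k - l) < e.
Definition strictly_increasing (phi : nat -> nat) := forall k, (phi k < phi k.+1)%nat.

Lemma incr_mono phi : strictly_increasing phi -> forall a b, (a < b)%nat -> (phi a < phi b)%nat.
Proof.
move=> hphi a; elim=> [//|b IH]; rewrite ltnS leq_eqVlt => /orP [/eqP ->|ab]; first exact: hphi.
exact: ltn_trans (IH ab) (hphi b).
Qed.

Lemma incr_ge phi : strictly_increasing phi -> forall k, (k <= phi k)%nat.
Proof. by move=> hphi; elim=> [//|k IH]; apply: leq_ltn_trans IH (hphi k). Qed.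

Lemma incr_comp phi psi : strictly_increasing phi -> strictly_increasing psi ->
  strictly_increasing (fun k => phi (psi k)).
Proof. by move=> h1 h2 k; apply: incr_mono. Qed.

Lemma converges_sub u l phi : strictly_increasing phi -> converges u l ->
  converges (fun k => u (phi k)) l.
Proof.
move=> hphi hu e e0; case: (hu e e0) => K hK; exists K => k hk; apply: hK.
exact: leq_trans hk (incr_ge hphi k).
Qed.

Lemma inv_succ_small e : 0 < e -> exists K, forall k, (K <= k)%nat -> / (INR k + 1) < e.
Proof.
move=> e0; case: (INR_unbounded (/ e)) => K hK; exists K => k hk.
have hKk : INR K <= INR k by apply: le_INR; apply/leP.
have pK := pos_INR K.
apply: (Rle_lt_trans _ (/ (INR K + 1))); first by apply: Rinv_le_contravar; lra.
rewrite -(Rinv_inv e); apply: Rinv_lt_contravar; last lra.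
by apply: Rmult_lt_0_compat; [apply: Rinv_0_lt_compat|]; lra.
Qed.

Lemma bounded_subseq (a : nat -> R) B : (forall k, Rabs (a k) <= B) ->
  exists phi l, strictly_increasing phi /\ converges (fun k => a (phi k)) l.
Proof.
move=> aB.
have [l hl] : exists l, ValAdh a l.
  apply: (Bolzano_Weierstrass a (fun c => - B <= c <= B)); first exact: compact_P3.
  by move=> k /=; apply/Rabs_le_between.
have close_after N k : exists p, (N <= p)%nat /\ Rabs (a p - l) < / (INR k + 1).
  have pos : 0 < / (INR k + 1) by apply: Rinv_0_lt_compat; have := pos_INR k; lra.
  case: (hl (disc l (mkposreal _ pos)) N) => [|p [hp hd]]; first by exists (mkposreal _ pos).
  by exists p; split => //; apply/leP.
pose pick N k := proj1_sig (constructive_indefinite_description _ (close_after N k)).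
have hpick N k : (N <= pick N k)%nat /\ Rabs (a (pick N k) - l) < / (INR k + 1)
  by exact: proj2_sig (constructive_indefinite_description _ (close_after N k)).
pose phi := fix f k := match k with O => pick O O | S k' => pick (S (f k')) (S k') end.
exists phi, l; split; first by move=> k /=; case: (hpick (phi k).+1 k.+1).
move=> e e0; case: (inv_succ_small e0) => K hK; exists K => k hk.
have : Rabs (a (phi k) - l) < / (INR k + 1)
  by case: k {hk} => [|k] /=; [case: (hpick 0%nat 0%nat) | case: (hpick (phi k).+1 k.+1)].
by have := hK k hk; lra.
Qed.

Lemma bounded_subseqN N (y : nat -> Rn N) B : (forall k i, Rabs (y k i) <= B) ->
  exists phi (l : Rn N), strictly_increasing phi /\ forall i, converges (fun k => y (phi k) i) (l i).
Proof.
move=> yB.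
suff first_m m : exists phi (l : Rn N), strictly_increasing phi /\
    forall i : 'I_N, (i < m)%nat -> converges (fun k => y (phi k) i) (l i).
  by case: (first_m N) => phi [l [hphi hl]]; exists phi, l; split => // i; apply: hl.
elim: m => [|m [phi [l [hphi hl]]]]; first by exists id, (fun _ => 0); split.
case: (ltnP m N) => hm; last first.
  by exists phi, l; split => // i hi; apply: hl; apply: leq_trans (ltn_ord i) hm.
pose i0 := Ordinal hm.
case: (bounded_subseq (a := fun k => y (phi k) i0) (B := B)) => [k|psi [l0 [hpsi hl0]]].
  exact: yB.
exists (fun k => phi (psi k)), (fun i => if i == i0 then l0 else l i).
split => [|i hi]; first exact: incr_comp.
case: eqP => [->|ne]; first exact: hl0.
apply: (converges_sub (u := fun k => y (phi k) i)) => //; apply: hl.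
rewrite ltnS leq_eqVlt in hi; case/orP: hi => // /eqP hi.
by case: ne; apply: val_inj.
Qed.

Lemma converges_dist N (z : nat -> Rn N) (l : Rn N) :
  (forall i, converges (fun k => z k i) (l i)) ->
  forall e, 0 < e -> exists K, forall k, (K <= k)%nat -> dist l (z k) < e.
Proof.
move=> hz e e0.
set e' := e / (INR N + 1).
have e'0 : 0 < e' by apply: Rdiv_lt_0_compat; have := pos_INR N; lra.
have Ki (i : 'I_N) : {K | forall k, (K <= k)%nat -> Rabs (z k i - l i) < e'}.
  by apply: constructive_indefinite_description; apply: hz.
exists (\max_(i < N) proj1_sig (Ki i)) => k hk.
have close i : (l i - z k i) * (l i - z k i) <= e' * e'.
  have : Rabs (z k i - l i) < e'.
    apply: (proj2_sig (Ki i)); apply: leq_trans hk.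
    exact: (@leq_bigmax _ (fun j => sval (Ki j)) i).
  rewrite -Rabs_Ropp Ropp_minus_distr => h.
  have := Rabs_pos (l i - z k i).
  have : (l i - z k i) * (l i - z k i) = Rabs (l i - z k i) * Rabs (l i - z k i)
    by rewrite -Rabs_mult Rabs_pos_eq //; apply: Rle_0_sqr.
  nra.
rewrite /dist /norm -/(dist2 _ _) -(sqrt_Rsqr e); last lra.
apply: sqrt_lt_1_alt; split; first exact: dist2_ge0.
apply: (Rle_lt_trans _ (INR N * (e' * e'))).
  by rewrite -sum_const; apply: sum_le.
have pN := pos_INR N.
have -> : INR N * (e' * e') = (e * e) * (INR N / ((INR N + 1) * (INR N + 1)))
  by rewrite /e'; field; lra.
have : INR N / ((INR N + 1) * (INR N + 1)) < 1.
  have pos : 0 < (INR N + 1) * (INR N + 1) by nra.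
  by apply: (Rmult_lt_reg_r _ _ _ pos); rewrite /Rdiv Rmult_assoc Rinv_l; nra.
move=> h; have : 0 < e * e by nra.
by rewrite /Rsqr; nra.
Qed.

Definition closed_set N (K : Rn N -> Prop) := forall x, clos K x -> K x.
Definition coord_bounded N (K : Rn N -> Prop) B := forall x, K x -> forall i, Rabs (x i) <= B.

Lemma cluster_value N (K : Rn N -> Prop) B (w : Rn N -> R) (y : nat -> Rn N) :
  coord_bounded K B -> closed_set K -> cont_on K w -> (forall k, K (y k)) ->
  exists l, K l /\ forall e, 0 < e -> forall k0, exists k, (k0 <= k)%nat /\ Rabs (w (y k) - w l) < e.
Proof.
move=> hB hK hw hy.
case: (bounded_subseqN (y := y) (B := B)) => [k i|phi [l [hphi hl]]]; first exact: hB.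
have hd := converges_dist hl.
have Kl : K l.
  apply: hK => r r0; case: (hd r r0) => k0 hk0.
  by exists (y (phi k0)); split => //; apply: hk0.
exists l; split => // e e0 k0.
case: (hw l Kl e e0) => d [d0 hwd]; case: (hd d d0) => k1 hk1.
exists (phi (maxn k0 k1)); split.
  exact: leq_trans (leq_maxl k0 k1) (incr_ge hphi _).
exact: hwd _ (hy _) (hk1 _ (leq_maxr k0 k1)).
Qed.

Lemma cont_bounded_below N (K : Rn N -> Prop) B (w : Rn N -> R) :
  coord_bounded K B -> closed_set K -> cont_on K w -> exists m, forall x, K x -> m <= w x.
Proof.
move=> hB hK hw; apply: NNPP => unbounded.
have low k : exists x, K x /\ w x < - INR k.
  apply: NNPP => hk; apply: unbounded; exists (- INR k) => x Kx.
  by apply: Rnot_lt_le => hl; apply: hk; exists x.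
pose y k := proj1_sig (constructive_indefinite_description _ (low k)).
have hy k : K (y k) /\ w (y k) < - INR k
  by exact: proj2_sig (constructive_indefinite_description _ (low k)).
case: (cluster_value hB hK hw (y := y)) => [k|l [Kl hl]]; first by case: (hy k).
case: (INR_unbounded (Rabs (w l) + 1)) => k0 hk0.
case: (hl 1 Rlt_0_1 k0) => k [hk hwk].
have : INR k0 <= INR k by apply: le_INR; apply/leP.
have := proj2 (hy k); have := Rle_abs (- w l); rewrite Rabs_Ropp.
by move/Rabs_lt_between: hwk; lra.
Qed.

Lemma extreme_value N (K : Rn N -> Prop) B (w : Rn N -> R) :
  (exists x, K x) -> coord_bounded K B -> closed_set K -> cont_on K w ->
  exists x0, K x0 /\ forall x, K x -> w x0 <= w x.
Proof.
move=> [x1 Kx1] hB hK hw.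
case: (cont_bounded_below hB hK hw) => mb hmb.
pose E r := exists x, K x /\ r = - w x.
have hE : bound E by exists (- mb) => r [x [Kx ->]]; have := hmb x Kx; lra.
case: (completeness E hE (ex_intro _ (- w x1) (ex_intro _ x1 (conj Kx1 erefl)))) => M [hub hlub].
have above x : K x -> - M <= w x.
  by move=> Kx; have := hub (- w x) (ex_intro _ x (conj Kx erefl)); lra.
have near_inf k : exists x, K x /\ w x < - M + / (INR k + 1).
  apply: NNPP => hk.
  have pos : 0 < / (INR k + 1) by apply: Rinv_0_lt_compat; have := pos_INR k; lra.
  suff : M <= M - / (INR k + 1) by lra.
  apply: hlub => r [x [Kx ->]].
  by apply: Rnot_lt_le => hl; apply: hk; exists x; split => //; lra.
pose y k := proj1_sig (constructive_indefinite_description _ (near_inf k)).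
have hy k : K (y k) /\ w (y k) < - M + / (INR k + 1)
  by exact: proj2_sig (constructive_indefinite_description _ (near_inf k)).
case: (cluster_value hB hK hw (y := y)) => [k|l [Kl hl]]; first by case: (hy k).
exists l; split => // x Kx.
suff : w l <= - M by have := above x Kx; lra.
apply: Rnot_lt_le => hlt.
have e0 : 0 < (w l + M) / 2 by lra.
case: (inv_succ_small e0) => k0 hk0.
case: (hl _ e0 k0) => k [hk hwk].
have := hk0 k hk; have := proj2 (hy k).
by move/Rabs_lt_between: hwk; lra.
Qed.

Lemma below_both a b : 0 < a -> 0 < b -> exists h, 0 < h /\ h < a /\ h < b.
Proof.
move=> a0 b0; exists (Rmin a b / 2).
by have := Rmin_pos a b a0 b0; have := Rmin_l a b; have := Rmin_r a b; do !split; lra.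
Qed.

Lemma le_of_slack a b K : (forall del, 0 < del -> a - del * K <= b) -> a <= b.
Proof.
move=> slack; apply: Rnot_lt_le => ba.
case: (Rle_lt_dec K 0) => K0; first by have := slack 1 Rlt_0_1; lra.
have := slack ((a - b) / (2 * K)) ltac:(apply: Rdiv_lt_0_compat; lra).
have -> : (a - b) / (2 * K) * K = (a - b) / 2 by field; lra.
lra.
Qed.

(* A one-variable function with an interior minimum at 0 has a nonnegative
   second derivative there: its derivative vanishes at 0 (Fermat), and a
   negative second derivative would make g decrease to the right of 0 (MVT). *)
Lemma min_second_derivative (g h : R -> R) d a : 0 < d ->
  (forall t, Rabs t < d -> g 0 <= g t) ->
  (forall t, Rabs t < d -> derivable_pt_lim g t (h t)) ->
  derivable_pt_lim h 0 a -> 0 <= a.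
Proof.
move=> d0 gmin dg dh.
have dg0 := dg 0 ltac:(rewrite Rabs_R0; lra).
have h0 : h 0 = 0.
  rewrite -(derive_pt_eq_0 _ _ _ (exist _ (h 0) dg0) dg0).
  apply: (deriv_minimum _ (- d) d); [lra | lra |].
  by move=> t t1 t2; apply: gmin; apply/Rabs_lt_between; lra.
apply: Rnot_lt_le => a_neg.
case: (dh (- a / 2) ltac:(lra)) => del hdel.
case: (below_both d0 (cond_pos del)) => t1 [t1pos [t1_d t1_del]].
have h_neg c : 0 < c -> c < del -> h c < 0.
  move=> c0 cdel; have := hdel c ltac:(lra) ltac:(rewrite Rabs_pos_eq; lra).
  rewrite Rplus_0_l h0 Rminus_0_r => /Rabs_lt_between q.
  have : h c / c < 0 by lra.
  have -> : h c / c = h c * / c by [].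
  by have := Rinv_0_lt_compat c c0; nra.
case: (MVT_cor2 g h 0 t1 t1pos) => [c hc|c [gt1 hc]].
  by apply: dg; rewrite Rabs_pos_eq; lra.
have := gmin t1 ltac:(rewrite Rabs_pos_eq; lra).
by have := h_neg c ltac:(lra) ltac:(lra); nra.
Qed.

Lemma derivative_translate f t l :
  derivable_pt_lim (fun s => f (t + s)) 0 l -> derivable_pt_lim f t l.
Proof.
move=> df e e0; case: (df e e0) => del hdel; exists del => s s0 sdel.
by have := hdel s s0 sdel; rewrite Rplus_0_l Rplus_0_r.
Qed.

Definition pure_partials N (D : Rn N -> Prop) (w : Rn N -> R) (d1 d2 : 'I_N -> Rn N -> R) :=
  (forall i y, D y -> pderiv_at w i y (d1 i y)) /\
  (forall i y, D y -> pderiv_at (d1 i) i y (d2 i y)).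

Lemma laplacian_at_min N (w : Rn N -> R) d1 d2 y r : 0 < r ->
  (forall y', dist y y' < r -> w y <= w y') -> pure_partials (fun y' => dist y y' < r) w d1 d2 ->
  0 <= sumR N (fun i => d2 i y).
Proof.
move=> r0 wmin [dw ddw]; apply: sum_ge0 => i.
have near t : Rabs t < r -> dist y (shift y i t) < r by rewrite dist_shift.
apply: (min_second_derivative (g := fun t => w (shift y i t)) (h := fun t => d1 i (shift y i t)) r0).
- by move=> t /near ht; rewrite shift0; apply: wmin.
- move=> t /near ht; apply: derivative_translate.
  by apply: (derivable_pt_lim_ext _ _ _ _ _ (dw i _ ht)) => s /=; rewrite shift_shift.
- by apply: ddw; rewrite dist_refl.
Qed.

(* At a minimum point inside the Laplacian would be nonnegative. *)
Lemma weak_minimum_principle N (D : Rn N -> Prop) B w d1 d2 :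
  is_open D -> coord_bounded (clos D) B -> cont_on (clos D) w -> pure_partials D w d1 d2 ->
  (forall y, D y -> sumR N (fun i => d2 i y) < 0) ->
  (forall y, clos D y -> ~ D y -> 0 <= w y) ->
  forall y, D y -> 0 <= w y.
Proof.
move=> Dopen DB wcont [dw ddw] lap_neg w_bdry y0 Dy0.
apply: Rnot_lt_le => wy0_neg.
case: (extreme_value (ex_intro _ y0 (clos_self Dy0)) DB (@clos_clos _ D) wcont) => x0 [cx0 x0min].
have wx0_neg : w x0 < 0 by have := x0min y0 (clos_self Dy0); lra.
case: (classic (D x0)) => Dx0; last by have := w_bdry x0 cx0 Dx0; lra.
case: (Dopen x0 Dx0) => r [r0 ball_r].
have := lap_neg x0 Dx0; suff : 0 <= sumR N (fun i => d2 i x0) by lra.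
apply: (laplacian_at_min r0) => [y' /ball_r Dy'|]; first exact: x0min (clos_self Dy').
by split=> i y' /ball_r Dy'; [apply: dw | apply: ddw].
Qed.

Section Calculus.
Variable N : nat.
Implicit Types (A D : Rn N -> Prop) (f g w : Rn N -> R).

Lemma cont_on_plus A f g : cont_on A f -> cont_on A g -> cont_on A (fun y => f y + g y).
Proof.
move=> cf cg x Ax e e0.
case: (cf x Ax (e / 2) ltac:(lra)) => d1 [d10 h1]; case: (cg x Ax (e / 2) ltac:(lra)) => d2 [d20 h2].
case: (below_both d10 d20) => d [d0 [d_d1 d_d2]].
exists d; split => // y Ay hy.
have := h1 y Ay ltac:(lra); have := h2 y Ay ltac:(lra).
have -> : f y + g y - (f x + g x) = (f y - f x) + (g y - g x) by ring.
by have := Rabs_triang (f y - f x) (g y - g x); lra.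
Qed.

Lemma cont_on_comp A f (h : R -> R) :
  cont_on A f -> (forall s, exists l, derivable_pt_lim h s l) -> cont_on A (fun y => h (f y)).
Proof.
move=> cf dh x Ax e e0.
case: (dh (f x)) => l hl.
case: (derivable_continuous_pt _ _ (exist _ l hl) e e0) => d1 [d10 hd1].
case: (cf x Ax d1 d10) => d [d0 hd]; exists d; split => // y Ay hy.
case: (Req_dec (f x) (f y)) => [->|ne]; first by rewrite Rminus_diag Rabs_R0.
exact: (hd1 (f y) (conj (conj I ne) (hd y Ay hy))).
Qed.

Lemma cont_on_const A a : cont_on A (fun _ => a).
Proof. by move=> x Ax e e0; exists 1; split => [|y _ _]; rewrite ?Rminus_diag ?Rabs_R0; lra. Qed.

Lemma cont_on_scal A a f : cont_on A f -> cont_on A (fun y => a * f y).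
Proof.
move=> cf; apply: (cont_on_comp (h := fun s => a * s)) => // s; exists a.
by apply is_derive_Reals; auto_derive => //; ring.
Qed.

Lemma cont_on_coord A j : cont_on A (fun y => y j).
Proof.
move=> x Ax e e0; exists e; split => // y _ hy.
by rewrite -Rabs_Ropp Ropp_minus_distr; have := coord_le_dist x y j; lra.
Qed.

Lemma cont_on_dist2 A z : cont_on A (fun y => dist2 y z).
Proof.
have -> : (fun y => dist2 y z) = (fun y => (fun s => s * s) (dist y z))
  by apply: functional_extensionality => y; rewrite dist_sqr.
apply: (cont_on_comp (f := fun y => dist y z) (h := fun s => s * s)) => [x Ax e e0|s]; last first.
  by exists (2 * s); apply is_derive_Reals; auto_derive => //; ring.
exists e; split => // y _ hy; apply/Rabs_lt_between.
by have := dist_tri y x z; have := dist_tri x y z; rewrite (dist_sym y x); lra.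
Qed.

Lemma pure_partials_plus D w1 w2 d1 d2 e1 e2 :
  pure_partials D w1 d1 d2 -> pure_partials D w2 e1 e2 ->
  pure_partials D (fun y => w1 y + w2 y) (fun i y => d1 i y + e1 i y) (fun i y => d2 i y + e2 i y).
Proof.
by move=> [a1 a2] [b1 b2]; split => i y Dy; apply: derivable_pt_lim_plus; [apply: a1|apply: b1|apply: a2|apply: b2].
Qed.

Lemma pure_partials_scal D w d1 d2 a : pure_partials D w d1 d2 ->
  pure_partials D (fun y => a * w y) (fun i y => a * d1 i y) (fun i y => a * d2 i y).
Proof. by move=> [a1 a2]; split => i y Dy; apply: derivable_pt_lim_scal; [apply: a1|apply: a2]. Qed.

Lemma pure_partials_const D a : pure_partials D (fun _ => a) (fun _ _ => 0) (fun _ _ => 0).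
Proof. by split => i y _; apply: derivable_pt_lim_const. Qed.

Lemma pure_partials_restrict D D' w d1 d2 : pure_partials D w d1 d2 ->
  (forall y, D' y -> D y) -> pure_partials D' w d1 d2.
Proof. by move=> [a1 a2] DD'; split => i y /DD' Dy; [apply: a1|apply: a2]. Qed.

Lemma pure_partials_coord D j :
  pure_partials D (fun y => y j) (fun i _ => if j == i then 1 else 0) (fun _ _ => 0).
Proof.
split => i y _; last exact: derivable_pt_lim_const.
rewrite /pderiv_at /shift; case: (j == i); last exact: derivable_pt_lim_const.
by apply is_derive_Reals; auto_derive => //; ring.
Qed.

Lemma pure_partials_dist2 D z :
  pure_partials D (fun y => dist2 y z) (fun i y => 2 * (y i - z i)) (fun _ _ => 2).
Proof.
split => i y _; rewrite /pderiv_at.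
  apply: (derivable_pt_lim_ext (fun t => dist2 y z + 2 * t * (y i - z i) + t * t))
    => [t|]; first by rewrite dist2_shift.
  by apply is_derive_Reals; auto_derive => //; ring.
apply: (derivable_pt_lim_ext (fun t => 2 * (y i + t - z i))) => [t|]; first by rewrite shift_at.
by apply is_derive_Reals; auto_derive => //; ring.
Qed.

Definition gaussian (al : R) (z y : Rn N) : R := exp (- al * dist2 y z).

Lemma pure_partials_gaussian D z al : pure_partials D (gaussian al z)
  (fun i y => - 2 * al * (y i - z i) * gaussian al z y)
  (fun i y => (4 * al * al * (y i - z i) * (y i - z i) - 2 * al) * gaussian al z y).
Proof.
rewrite /gaussian; split => i y _; rewrite /pderiv_at.
  apply: (derivable_pt_lim_ext (fun t => exp (- al * (dist2 y z + 2 * t * (y i - z i) + t * t))))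
    => [t|]; first by rewrite dist2_shift.
  apply is_derive_Reals; auto_derive => //.
  have -> : dist2 y z + 2 * 0 * (y i - z i) + 0 * 0 = dist2 y z by ring.
  ring.
apply: (derivable_pt_lim_ext (fun t => - 2 * al * (y i + t - z i) *
          exp (- al * (dist2 y z + 2 * t * (y i - z i) + t * t)))) => [t|].
  by rewrite dist2_shift shift_at.
apply is_derive_Reals; auto_derive => //.
have -> : dist2 y z + 2 * 0 * (y i - z i) + 0 * 0 = dist2 y z by ring.
ring.
Qed.

Lemma laplacian_gaussian al z y :
  sumR N (fun i => (4 * al * al * (y i - z i) * (y i - z i) - 2 * al) * gaussian al z y) =
  (4 * al * al * dist2 y z - 2 * al * INR N) * gaussian al z y.
Proof.
rewrite (eq_bigr (fun i => (gaussian al z y * (4 * al * al)) * ((y i - z i) * (y i - z i)) +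
                           - 2 * al * gaussian al z y)); last by move=> i _; ring.
by rewrite sum_plus sum_scal sum_const /dist2; ring.
Qed.
End Calculus.

Section Barrier.
Variables (N : nat) (z : Rn N) (rho rad : R).
Hypotheses (rho_pos : 0 < rho) (rho_R : rho < rad).

Definition barrier_rate := (INR N + 1) / (rho * rho).
Local Notation al := barrier_rate.
Definition barrier_gap := exp (- al * (rho * rho)) - exp (- al * (rad * rad)).
Local Notation gap := barrier_gap.
Definition barrier (y : Rn N) := (gaussian al z y - exp (- al * (rad * rad))) / gap.

Lemma barrier_rate_pos : 0 < al.
Proof. by rewrite /barrier_rate; apply: Rdiv_lt_0_compat; [have := pos_INR N|]; nra. Qed.

Lemma gaussian_profile_decr s t : 0 <= s -> s < t -> exp (- al * (t * t)) < exp (- al * (s * s)).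
Proof.
move=> s0 st; apply: exp_increasing; have := barrier_rate_pos.
have : s * s < t * t by nra.
nra.
Qed.

Lemma barrier_gap_pos : 0 < gap.
Proof. by have := gaussian_profile_decr (Rlt_le _ _ rho_pos) rho_R; rewrite /barrier_gap; lra. Qed.

Lemma barrier_inner y : dist y z = rho -> barrier y = 1.
Proof.
move=> yz; have := barrier_gap_pos.
by rewrite /barrier /gaussian -dist_sqr yz /barrier_gap => ?; field; lra.
Qed.

Lemma barrier_outer y : dist y z = rad -> barrier y = 0.
Proof. by move=> yz; rewrite /barrier /gaussian -dist_sqr yz Rminus_diag /Rdiv Rmult_0_l. Qed.

Lemma barrier_pos y : dist y z < rad -> 0 < barrier y.
Proof.
move=> yz; apply: Rdiv_lt_0_compat; last exact: barrier_gap_pos.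
by rewrite /gaussian -dist_sqr; have := gaussian_profile_decr (dist_ge0 y z) yz; lra.
Qed.

Lemma barrier_cont A : cont_on A barrier.
Proof.
rewrite /barrier /Rdiv; apply: (cont_on_comp (f := gaussian al z) (h := fun s => (s - exp (- al * (rad * rad))) * / gap))
  => [|s]; last by exists (/ gap); apply is_derive_Reals; auto_derive => //; ring.
apply: (cont_on_comp (f := fun y => - al * dist2 y z) (h := exp)) => [|s].
  by apply: (cont_on_scal (- al) (f := fun y => dist2 y z)); apply: cont_on_dist2.
by exists (exp s); apply: derivable_pt_lim_exp.
Qed.

Lemma barrier_pure_partials D : pure_partials D barrier
  (fun i y => / gap * (- 2 * al * (y i - z i) * gaussian al z y) + 0)
  (fun i y => / gap * ((4 * al * al * (y i - z i) * (y i - z i) - 2 * al) * gaussian al z y) + 0).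
Proof.
have -> : barrier = fun y => / gap * gaussian al z y + - (exp (- al * (rad * rad)) / gap).
  by apply: functional_extensionality => y; rewrite /barrier /Rdiv; ring.
exact: pure_partials_plus (pure_partials_scal _ (pure_partials_gaussian D z al))
                          (pure_partials_const D _).
Qed.

(* Strict subharmonicity on the exterior of the inner ball: the choice of al
   makes 4 al^2 |y-z|^2 > 4 al^2 rho^2 = 4 al (N + 1) > 2 al N. *)
Lemma barrier_laplacian_pos y : rho < dist y z ->
  0 < sumR N (fun i => / gap * ((4 * al * al * (y i - z i) * (y i - z i) - 2 * al) * gaussian al z y) + 0).
Proof.
move=> yz; rewrite sum_plus sum_scal laplacian_gaussian (eq_bigr (fun _ => 0)) // sum_const.
have al0 := barrier_rate_pos; have := Rinv_0_lt_compat _ barrier_gap_pos.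
have : 0 < (4 * al * al * dist2 y z - 2 * al * INR N) * gaussian al z y.
  apply: Rmult_lt_0_compat; last exact: exp_pos.
  have : rho * rho < dist2 y z by rewrite -dist_sqr; nra.
  have : al * (rho * rho) = INR N + 1 by rewrite /barrier_rate; field; lra.
  by have := pos_INR N; nra.
by nra.
Qed.

(* Linear growth away from the outer sphere, the quantitative content of Hopf's lemma. *)
Definition hopf_slope := exp (- al * (rad * rad)) * al * rad / gap.

Lemma hopf_slope_pos : 0 < hopf_slope.
Proof.
have := barrier_rate_pos; have := barrier_gap_pos; have := exp_pos (- al * (rad * rad)).
move=> *; rewrite /hopf_slope; apply: Rdiv_lt_0_compat => //.
by apply: Rmult_lt_0_compat; [apply: Rmult_lt_0_compat|]; lra.
Qed.

Lemma barrier_linear_growth y h : 0 < h -> rho < rad - h -> dist y z = rad - h ->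
  hopf_slope * h <= barrier y.
Proof.
move=> h0 hR yz; have al0 := barrier_rate_pos; have gap0 := barrier_gap_pos.
rewrite /hopf_slope /barrier /gaussian -dist_sqr yz /Rdiv.
have -> : exp (- al * (rad * rad)) * al * rad * / gap * h = (exp (- al * (rad * rad)) * al * rad * h) * / gap
  by ring.
apply: Rmult_le_compat_r; first by apply: Rlt_le; apply: Rinv_0_lt_compat.
have -> : exp (- al * ((rad - h) * (rad - h))) = exp (- al * (rad * rad)) * exp (al * (2 * rad * h - h * h))
  by rewrite -exp_plus; f_equal; ring.
have : 1 + al * (2 * rad * h - h * h) <= exp (al * (2 * rad * h - h * h)).
  case: (Req_dec (al * (2 * rad * h - h * h)) 0) => [->|ne]; first by rewrite exp_0; lra.
  by apply: Rlt_le; apply: exp_ineq1.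
have E0 := exp_pos (- al * (rad * rad)).
have : al * rad * h <= al * (2 * rad * h - h * h).
  have : 0 <= h * (rad - h) by nra.
  nra.
by nra.
Qed.
End Barrier.

Lemma annulus_open N (z : Rn N) rho rad : is_open (fun y => rho < dist y z < rad).
Proof.
move=> y [h1 h2]; exists (Rmin (dist y z - rho) (rad - dist y z)).
split => [|y' hy']; first by apply: Rmin_pos; lra.
have := Rmin_l (dist y z - rho) (rad - dist y z); have := Rmin_r (dist y z - rho) (rad - dist y z).
by have := dist_tri y' y z; have := dist_tri y y' z; rewrite (dist_sym y' y); split; lra.
Qed.

Lemma annulus_closure N (z : Rn N) rho rad y :
  clos (fun y => rho < dist y z < rad) y -> rho <= dist y z <= rad.
Proof.
move=> cy; split; apply: Rnot_lt_le => h.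
- case: (cy (rho - dist y z) ltac:(lra)) => y' [[h1 h2] h3].
  by have := dist_tri y' y z; rewrite (dist_sym y' y); lra.
- case: (cy (dist y z - rad) ltac:(lra)) => y' [[h1 h2] h3].
  by have := dist_tri y y' z; lra.
Qed.

Section HarmonicComparison.
Variables (N : nat) (Om C : Rn N -> Prop) (v : Rn N -> R) (d1 d2 : 'I_N -> Rn N -> R).
Hypothesis v_partials : pure_partials Om v d1 d2.
Hypothesis v_harmonic : forall y, Om y -> sumR N (fun i => d2 i y) = 0.
Hypothesis v_cont : cont_on C v.
Hypothesis v_nonneg : forall y, C y -> 0 <= v y.

(* If v >= m > 0 on the inner ball then v >= m * barrier on the annulus:
   v - m * barrier is a strict supersolution, nonnegative on both spheres. *)
Lemma annulus_comparison z rho rad m : 0 < rho -> rho < rad -> 0 < m ->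
  (forall y, dist y z < rad -> Om y) -> (forall y, dist y z <= rad -> C y) ->
  (forall y, dist y z <= rho -> m <= v y) ->
  forall y, rho < dist y z < rad -> m * barrier z rho rad y <= v y.
Proof.
move=> rho0 rho_rad m0 ball_Om ball_C inner.
pose D y := rho < dist y z < rad.
have D_Om y : D y -> Om y by move=> [_ ?]; apply: ball_Om.
have D_C y : clos D y -> C y by move/annulus_closure => [_ ?]; apply: ball_C.
suff : forall y, D y -> 0 <= v y + - m * barrier z rho rad y by move=> key y /key; lra.
have w_partials := pure_partials_plus (pure_partials_restrict v_partials D_Om)
  (pure_partials_scal (- m) (barrier_pure_partials z rho rad D)).
apply: (weak_minimum_principle (B := norm z + rad + 1) _ _ _ w_partials).
- exact: annulus_open.
- move=> y /annulus_closure [_ yz] i.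
  have := coord_le_dist y z i; have := coord_le_norm z i.
  by have := Rabs_triang (y i - z i) (z i); rewrite Rplus_comm Rplus_minus; lra.
- apply: cont_on_plus; first exact: cont_on_sub v_cont D_C.
  by apply: (cont_on_scal (- m) (f := barrier z rho rad)); apply: barrier_cont.
- move=> y Dy; rewrite sum_plus v_harmonic ?sum_scal; last exact: D_Om.
  by have := barrier_laplacian_pos rho0 rho_rad (proj1 Dy); nra.
- move=> y cy nDy; have [yz1 yz2] := annulus_closure cy.
  case: (Rle_lt_or_eq_dec _ _ yz1) => [yz1'|yz_rho]; last first.
    rewrite (barrier_inner rho0 rho_rad (esym yz_rho)).
    by have := inner y (Req_le _ _ (esym yz_rho)); lra.
  case: (Rle_lt_or_eq_dec _ _ yz2) => [yz2'|yzR]; first by case: nDy.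
  by rewrite barrier_outer //; have := v_nonneg (ball_C y (Req_le _ _ yzR)); lra.
Qed.

Lemma inner_ball_lower_bound z rad : 0 < rad -> (forall y, dist y z <= rad -> C y) -> 0 < v z ->
  exists rho, 0 < rho /\ rho < rad /\ forall y, dist y z <= rho -> v z / 2 <= v y.
Proof.
move=> rad0 ball_C vz.
have Cz : C z by apply: ball_C; rewrite dist_refl; lra.
case: (v_cont Cz (eps := v z / 2) ltac:(lra)) => d [d0 hd].
case: (below_both d0 rad0) => rho [rho0 [rho_d rho_rad]].
exists rho; do 2!split => //.
move=> y yz; have /Rabs_lt_between : Rabs (v y - v z) < v z / 2.
  by apply: hd; [apply: ball_C | rewrite dist_sym]; lra.
lra.
Qed.

Lemma positivity_spreads z rad y : 0 < rad ->
  (forall y, dist y z < rad -> Om y) -> (forall y, dist y z <= rad -> C y) ->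
  0 < v z -> dist y z < rad -> 0 < v y.
Proof.
move=> rad0 ball_Om ball_C vz yz.
case: (inner_ball_lower_bound rad0 ball_C vz) => rho [rho0 [rho_rad inner]].
case: (Rle_lt_dec (dist y z) rho) => [y_in|y_out]; first by have := inner y y_in; lra.
have := annulus_comparison (m := v z / 2) rho0 rho_rad ltac:(lra) ball_Om ball_C inner (conj y_out yz).
by have := barrier_pos rho0 rho_rad yz; nra.
Qed.

Lemma hopf_lemma z rad : 0 < rad ->
  (forall y, dist y z < rad -> Om y) -> (forall y, dist y z <= rad -> C y) -> 0 < v z ->
  exists kappa delta, 0 < kappa /\ 0 < delta /\
    forall y h, 0 < h < delta -> dist y z = rad - h -> kappa * h <= v y.
Proof.
move=> rad0 ball_Om ball_C vz.
case: (inner_ball_lower_bound rad0 ball_C vz) => rho [rho0 [rho_rad inner]].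
exists (v z / 2 * hopf_slope N rho rad), (rad - rho).
have slope0 := hopf_slope_pos N rho0 rho_rad.
split; first by apply: Rmult_lt_0_compat; lra.
split; first lra.
move=> y h [h0 h_small] yz.
have := annulus_comparison (m := v z / 2) rho0 rho_rad ltac:(lra) ball_Om ball_C inner (y := y) ltac:(rewrite yz; lra).
have := barrier_linear_growth rho0 rho_rad h0 ltac:(lra) yz.
by nra.
Qed.
End HarmonicComparison.

Lemma harmonic_pure_partials N (U : Rn N -> Prop) f : harmonic_on U f ->
  exists d1 d2, pure_partials U f d1 d2 /\ forall y, U y -> sumR N (fun i => d2 i y) = 0.
Proof.
case=> d1 [d2 [[_ [dd1 [_ [dd2 _]]]] lap0]].
by exists d1, (fun i y => d2 i i y); split => //; split => i y Uy; [apply: dd1 | apply: dd2].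
Qed.

Lemma clos_norm_bound n (H : Rn n -> Prop) M x :
  (forall x, H x -> norm x <= M) -> clos H x -> norm x <= M + 1.
Proof.
move=> HM cx; case: (cx 1 Rlt_0_1) => x' [Hx' d].
by have := norm_le_dist x x'; have := HM x' Hx'; lra.
Qed.

Definition truncated_cyl n (H : Rn n -> Prop) L (y : Rn n.+1) := cyl H y /\ y ord_max < L.

Lemma truncated_cyl_open n (H : Rn n -> Prop) L : is_open H -> is_open (truncated_cyl H L).
Proof.
move=> H_open y [[x [l [-> [Hx l0]]]] lL]; rewrite ext_last in lL.
case: (H_open x Hx) => r [r0 ball_r].
case: (below_both l0 (ltac:(lra) : 0 < L - l)) => s [s0 [s_l s_L]].
case: (below_both r0 s0) => e [e0 [e_r e_s]].
exists e; split => // y' yy'.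
rewrite -(ext_proj y') in yy' *; move: (proj y') (y' ord_max) yy' => x' l' yy'.
have := dist_ext_base x x' l l'; have /Rabs_le_between := dist_ext_height x x' l l'.
move=> ? ?; split; last by rewrite ext_last; lra.
by apply/cyl_ext; split; [apply: ball_r|]; lra.
Qed.

Lemma truncated_cyl_closure n (H : Rn n -> Prop) L y : clos (truncated_cyl H L) y ->
  exists x l, y = ext x l /\ clos H x /\ 0 <= l <= L.
Proof.
move=> cy; exists (proj y), (y ord_max); rewrite ext_proj; split => //.
have [cx l0] : clos H (proj y) /\ 0 <= y ord_max.
  by apply: clos_cyl_inv; rewrite ext_proj; apply: clos_mono cy => y' [].
do 2!split => //; apply: Rnot_lt_le => lL.
case: (cy (y ord_max - L) ltac:(lra)) => y' [[_ y'L] d].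
by have /Rabs_le_between := coord_le_dist y y' ord_max; lra.
Qed.

Definition origin N : Rn N := fun _ => 0.
Arguments origin : clear implicits.

Lemma dist2_origin_ext n (x : Rn n) l : dist2 (ext x l) (origin n.+1) = norm x * norm x + l * l.
Proof.
have -> : origin n.+1 = ext (origin n) 0.
  by apply: functional_extensionality => j; rewrite /ext /origin; case: unliftP.
rewrite dist2_ext /norm sqrt_sqrt; last by apply: sum_ge0 => i; apply: Rle_0_sqr.
by rewrite /dist2 /origin; congr (_ + _); [apply: eq_bigr => i _|]; ring.
Qed.

Lemma truncated_closure_bounds n (H : Rn n -> Prop) Mh L y :
  (forall x, H x -> norm x <= Mh) -> clos (truncated_cyl H L) y ->
  (forall j, Rabs (y j) <= Mh + 1 + L) /\ dist2 y (origin n.+1) <= (Mh + 1) * (Mh + 1) + L * L.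
Proof.
move=> HMh /truncated_cyl_closure [x [l [-> [cx [l0 lL]]]]].
have xM := clos_norm_bound HMh cx; have := norm_ge0 x.
rewrite dist2_origin_ext => x0; split => [j|]; last nra.
rewrite /ext; case: unliftP => [i _|_]; last by rewrite Rabs_pos_eq; lra.
by have := coord_le_norm x i; lra.
Qed.

(* For eps, del > 0 the function
     v + eps * lambda + del * (K - |y|^2)
   is a strict supersolution on the truncated cylinder of height L ~ sup|v| / eps,
   nonnegative on its boundary (lateral data phi >= 0, bottom data u >= 0,
   top where eps * L dominates v); letting eps, del -> 0 gives v >= 0. *)
Section CylinderNonneg.
Variables (n : nat) (H : Rn n -> Prop) (phi u : Rn n -> R) (v : Rn n.+1 -> R).
Hypotheses (H_bounded : bounded H) (H_open : is_open H).
Hypothesis u_nonneg : forall x, H x -> 0 <= u x.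
Hypothesis phi_nonneg : forall x, boundary H x -> 0 <= phi x.
Hypothesis v_ext : harm_ext H phi u v.

Lemma truncated_boundary_nonneg eps L Mv y :
  0 < eps -> (forall y, cyl H y -> Rabs (v y) <= Mv) -> Mv <= eps * L ->
  clos (truncated_cyl H L) y -> ~ truncated_cyl H L y -> 0 <= v y + eps * y ord_max.
Proof.
case: v_ext => _ [_ [_ [v_bottom v_side]]] eps0 vM epsL cy nDy.
case: (truncated_cyl_closure cy) => x [l [yxl [cx [l0 lL]]]].
rewrite yxl ext_last.
case: (classic (H x)) => Hx; last first.
  by rewrite v_side //; have := phi_nonneg (conj cx Hx); nra.
case: (Rle_lt_or_eq_dec _ _ l0) => [l_pos|<-]; last by rewrite v_bottom //; have := u_nonneg Hx; lra.
case: (Rle_lt_or_eq_dec _ _ lL) => [l_lt|->].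
  by case: nDy; rewrite yxl; split; [apply/cyl_ext | rewrite ext_last].
have /Rabs_le_between : Rabs (v (ext x L)) <= Mv by apply: vM; apply/cyl_ext; split => //; lra.
lra.
Qed.

Lemma cylinder_lower_bound x0 l0 eps : H x0 -> 0 < l0 -> 0 < eps ->
  exists K, forall del, 0 < del -> - eps * l0 - del * K <= v (ext x0 l0).
Proof.
move=> Hx0 l0pos eps0.
case: (v_ext) => v_harm [[Mv vM] [v_cont _]].
case: H_bounded => Mh HMh.
case: (harmonic_pure_partials v_harm) => d1 [d2 [v_partials v_lap]].
have Mv0 : 0 <= Mv by have := vM _ (proj2 (cyl_ext H x0 l0) (conj Hx0 l0pos)); have := Rabs_pos (v (ext x0 l0)); lra.
set L := Mv / eps + l0 + 1.
have epsL : Mv <= eps * L.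
  rewrite /L; have -> : eps * (Mv / eps + l0 + 1) = Mv + eps * (l0 + 1) by field; lra.
  by nra.
have l0L : l0 < L.
  have : 0 <= Mv / eps by apply: Rdiv_le_0_compat; lra.
  by rewrite /L; lra.
set K := (Mh + 1) * (Mh + 1) + L * L.
exists K => del del0.
pose D := truncated_cyl H L.
have D_cyl y : D y -> cyl H y by case.
have w_partials := pure_partials_plus
  (pure_partials_plus (pure_partials_restrict v_partials D_cyl)
                      (pure_partials_scal eps (pure_partials_coord D ord_max)))
  (pure_partials_plus (pure_partials_const D (del * K))
                      (pure_partials_scal (- del) (pure_partials_dist2 D (origin n.+1)))).
have : 0 <= (v (ext x0 l0) + eps * ext x0 l0 ord_max) +
            (del * K + - del * dist2 (ext x0 l0) (origin n.+1)).
  apply: (weak_minimum_principle (B := Mh + 1 + L) _ _ _ w_partials) => [|y cy j|||y cy nDy|].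
  - exact: truncated_cyl_open.
  - exact: (truncated_closure_bounds HMh cy).1 j.
  - apply: cont_on_plus; apply: cont_on_plus.
    + by apply: (cont_on_sub v_cont) => y; apply: clos_mono => y' [].
    + by apply: (cont_on_scal eps (f := fun y => y ord_max)); apply: cont_on_coord.
    + exact: cont_on_const.
    + by apply: (cont_on_scal (- del) (f := fun y => dist2 y (origin n.+1))); apply: cont_on_dist2.
  - move=> y Dy; rewrite !sum_plus v_lap; last exact: D_cyl.
    rewrite !sum_const S_INR.
    by have := pos_INR n; nra.
  - have := truncated_boundary_nonneg eps0 vM epsL cy nDy.
    by have := (truncated_closure_bounds HMh cy).2; rewrite /K; nra.
  - by split; [apply/cyl_ext | rewrite ext_last].
rewrite ext_last; have := dist2_ge0 (ext x0 l0) (origin n.+1).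
by nra.
Qed.

Lemma harm_ext_nonneg y : clos (cyl H) y -> 0 <= v y.
Proof.
have inside y' : cyl H y' -> 0 <= v y'.
  case=> x0 [l0 [-> [Hx0 l0pos]]].
  apply: (le_of_slack (K := l0)) => eps eps0; rewrite Rminus_0_l.
  case: (cylinder_lower_bound Hx0 l0pos eps0) => K low.
  by apply: (le_of_slack (K := K)) => del del0; have := low del del0; lra.
move=> cy; apply: Rnot_lt_le => vy_neg.
case: v_ext => _ [_ [v_cont _]].
case: (v_cont y cy (- v y) ltac:(lra)) => d [d0 hd].
case: (cy d d0) => y' [Cy' yy'].
have /Rabs_lt_between := hd y' (clos_self Cy') yy'.
by have := inside y' Cy'; lra.
Qed.
End CylinderNonneg.

(* A property of heights that propagates from s to (s/2, s] and holds at t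
   holds on all of (0, t]: for a ratio 1/2 < q < 1 the intervals
   [t q^(k+1), t q^k] are covered successively. *)
Lemma downward_halving (Z : R -> Prop) t : 0 < t -> Z t ->
  (forall s, 0 < s <= t -> Z s -> forall tau, s / 2 < tau <= s -> Z tau) ->
  forall tau, 0 < tau <= t -> Z tau.
Proof.
move=> t0 Zt step.
have [q [q_half q_lt1]] : exists q, 1 / 2 < q /\ q < 1 by exists (3 / 4); lra.
have q_pow k : 0 < q ^ k <= 1.
  by elim: k => [|k [IH1 IH2]] /=; split; nra.
have covered k : forall tau, t * q ^ k <= tau <= t -> Z tau.
  elim: k => [|k IH] tau [lo hi]; first by have -> : tau = t by move: lo; rewrite /= Rmult_1_r; lra.
  case: (Rle_lt_dec (t * q ^ k) tau) => [lo'|hi']; first exact: IH.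
  have [qk0 qk1] := q_pow k.
  apply: (step (t * q ^ k)); [nra | apply: IH; nra |].
  by move: lo; rewrite /=; nra.
move=> tau [tau0 tau_t].
case: (pow_lt_1_zero q ltac:(rewrite Rabs_pos_eq; lra) (tau / t) ltac:(apply: Rdiv_lt_0_compat; lra)) => k hk.
apply: (covered k); split => //.
have := hk k (le_n k); rewrite Rabs_pos_eq; last by have := q_pow k; lra.
move=> /(Rmult_lt_compat_l t _ _ t0).
have -> : t * (tau / t) = tau by field; lra.
lra.
Qed.

Section CylinderBalls.
Variables (n : nat) (H : Rn n -> Prop) (x0 : Rn n) (r0 : R).
Hypothesis ball_H : forall x, dist x0 x < r0 -> H x.

Lemma ball_in_cyl x t s : 0 < s -> s <= t -> dist x0 x + s < r0 ->
  forall y, dist y (ext x t) < s -> cyl H y.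
Proof.
move=> s0 st xs y; rewrite -(ext_proj y) => yxt; apply/cyl_ext.
have := dist_ext_base (proj y) x (y ord_max) t.
have /Rabs_lt_between := Rle_lt_trans _ _ _ (dist_ext_height (proj y) x (y ord_max) t) yxt.
move=> ? ?; split; last lra.
by apply: ball_H; have := dist_tri x0 x (proj y); rewrite (dist_sym x (proj y)); lra.
Qed.

Lemma closed_ball_in_clos_cyl x t s : 0 < s -> s <= t -> dist x0 x + s < r0 ->
  forall y, dist y (ext x t) <= s -> clos (cyl H) y.
Proof.
move=> s0 st xs y; rewrite -(ext_proj y) => yxt.
have := dist_ext_base (proj y) x (y ord_max) t.
have /Rabs_le_between := Rle_trans _ _ _ (dist_ext_height (proj y) x (y ord_max) t) yxt.
move=> ? ?; apply: clos_cyl_ext; last lra.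
by apply: ball_H; have := dist_tri x0 x (proj y); rewrite (dist_sym x (proj y)); lra.
Qed.
End CylinderBalls.

(* Zeros of the nonnegative harmonic extension v. *)
Section ExtensionZeros.
Variables (n : nat) (H : Rn n -> Prop) (u : Rn n -> R) (v : Rn n.+1 -> R)
  (d1 d2 : 'I_n.+1 -> Rn n.+1 -> R).
Hypothesis v_partials : pure_partials (cyl H) v d1 d2.
Hypothesis v_harmonic : forall y, cyl H y -> sumR n.+1 (fun i => d2 i y) = 0.
Hypothesis v_cont : cont_on (clos (cyl H)) v.
Hypothesis v_nonneg : forall y, clos (cyl H) y -> 0 <= v y.
Hypothesis v_bottom : forall x, H x -> v (ext x 0) = u x.

Lemma zeros_spread y rho0 : 0 < rho0 -> (forall y', dist y' y < rho0 -> cyl H y') ->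
  v y = 0 -> forall y', dist y' y < rho0 / 2 -> v y' = 0.
Proof.
move=> rho0_pos ball vy y' y'y.
have cy' : cyl H y' by apply: ball; lra.
case: (Rle_lt_or_eq_dec _ _ (v_nonneg (clos_self cy'))) => [vy'|//]; exfalso.
have inside w : dist w y' < rho0 / 2 -> cyl H w.
  by move=> wy'; apply: ball; have := dist_tri w y' y; lra.
have closed_inside w : dist w y' <= rho0 / 2 -> clos (cyl H) w.
  by move=> wy'; apply: clos_self; apply: ball; have := dist_tri w y' y; lra.
have := positivity_spreads v_partials v_harmonic v_cont v_nonneg (z := y') (rad := rho0 / 2) (y := y)
  ltac:(lra) inside closed_inside vy' ltac:(rewrite dist_sym; lra).
lra.
Qed.

(* Hopf step: at a zero x0 of u where the lambda-derivative of v is <= 0, v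
   vanishes on the vertical segment above x0 (otherwise Hopf's lemma would
   give v(x0, h) >= kappa h). *)
Lemma hopf_vanishing x0 r0 L : (forall x, dist x0 x < r0 -> H x) -> u x0 = 0 ->
  dlam0 v x0 L -> L <= 0 -> forall t, 0 < t < r0 -> v (ext x0 t) = 0.
Proof.
move=> ball_H ux0 slope L_nonpos t [t0 t_r0].
have Hx0 : H x0 by apply: ball_H; rewrite dist_refl; lra.
have x0t : dist x0 x0 + t < r0 by rewrite dist_refl; lra.
case: (Rle_lt_or_eq_dec _ _ (v_nonneg (clos_cyl_ext Hx0 (Rlt_le _ _ t0)))) => [v_pos|//]; exfalso.
case: (hopf_lemma v_partials v_harmonic v_cont v_nonneg t0
        (fun y => ball_in_cyl ball_H t0 (Rle_refl t) x0t (y := y))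
        (fun y => closed_ball_in_clos_cyl ball_H t0 (Rle_refl t) x0t (y := y)) v_pos)
  => kappa [delta [kappa0 [delta0 growth]]].
case: (slope (kappa / 2) ltac:(lra)) => del [del0 quotient].
case: (below_both del0 (Rmin_pos _ _ delta0 t0)) => h [h0 [h_del h_min]].
have := Rmin_l delta t; have := Rmin_r delta t; move=> ? ?.
have lower : kappa * h <= v (ext x0 h).
  by apply: growth; [lra | rewrite dist_ext_vert Rabs_left; lra].
have := quotient h ltac:(lra); rewrite v_bottom // ux0 Rminus_0_r.
move=> /Rabs_lt_between [_ q].
have : kappa <= v (ext x0 h) / h.
  by apply: (Rmult_le_reg_r h) => //; rewrite /Rdiv Rmult_assoc Rinv_l; lra.
lra.
Qed.

(* If v vanishes on the segment above x0, it vanishes above a whole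
   neighbourhood of x0 (spreading sideways, then down by halving), and hence
   u = v(., 0) vanishes there by continuity. *)
Lemma vanishing_near x0 r0 : 0 < r0 -> (forall x, dist x0 x < r0 -> H x) ->
  (forall t, 0 < t < r0 -> v (ext x0 t) = 0) -> forall x, dist x0 x < r0 / 8 -> u x = 0.
Proof.
move=> r0_pos ball_H segment x xx0.
have Hx : H x by apply: ball_H; lra.
pose t := r0 / 4.
have column : forall tau, 0 < tau <= t -> v (ext x tau) = 0.
  apply: (downward_halving (Z := fun tau => v (ext x tau) = 0)); rewrite /t; first lra.
    have := @zeros_spread (ext x0 (r0 / 4)) (r0 / 4) ltac:(lra)
      (fun y => ball_in_cyl ball_H (x := x0) (t := r0 / 4) (s := r0 / 4) ltac:(lra) (Rle_refl _)
                 ltac:(rewrite dist_refl; lra) (y := y))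
      (segment (r0 / 4) ltac:(lra)) (ext x (r0 / 4)).
    by rewrite dist_ext_horiz dist_sym; apply; lra.
  move=> s [s0 st] vs tau [tau_lo tau_hi].
  apply: (zeros_spread s0 (fun y => ball_in_cyl ball_H (x := x) s0 (Rle_refl _) ltac:(lra) (y := y)) vs).
  by rewrite dist_ext_vert Rabs_left1; lra.
apply: NNPP => ux_ne0.
have ux_pos : 0 < Rabs (u x) by apply: Rabs_pos_lt.
have cx0 : clos (cyl H) (ext x 0) by apply: clos_cyl_ext => //; lra.
case: (v_cont cx0 ux_pos) => dd [dd0 hdd].
case: (below_both dd0 (ltac:(rewrite /t; lra) : 0 < t)) => tau [tau0 [tau_dd tau_t]].
have := hdd (ext x tau) (clos_cyl_ext Hx (Rlt_le _ _ tau0)) ltac:(rewrite dist_ext_vert Rabs_left; lra).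
rewrite column ?v_bottom // ?Rminus_0_l ?Rabs_Ropp; lra.
Qed.
End ExtensionZeros.

Lemma zero_set_open n (H : Rn n -> Prop) (c u phi : Rn n -> R) :
  is_open H -> bounded H ->
  (forall x, H x -> 0 <= u x) -> (forall x, boundary H x -> 0 <= phi x) ->
  (forall x, H x -> exists d, DN H phi u x d /\ d + c x * u x >= 0) ->
  is_open (fun x => H x /\ u x = 0).
Proof.
move=> H_open H_bounded u_nonneg phi_nonneg DN_ineq x0 [Hx0 ux0].
case: (DN_ineq x0 Hx0) => d [[v [v_ext slope]] d_ineq].
have slope_nonpos : - d <= 0 by move: d_ineq; rewrite ux0 Rmult_0_r Rplus_0_r; lra.
have v_nonneg := harm_ext_nonneg H_bounded H_open u_nonneg phi_nonneg v_ext.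
case: v_ext => v_harm [_ [v_cont [v_bottom _]]].
case: (harmonic_pure_partials v_harm) => d1 [d2 [v_partials v_lap]].
case: (H_open x0 Hx0) => r0 [r0_pos ball_H].
have segment := hopf_vanishing v_partials v_lap v_cont v_nonneg v_bottom ball_H ux0 slope slope_nonpos.
exists (r0 / 8); split => [|x xx0]; first lra.
split; first by apply: ball_H; lra.
by move: xx0; apply: (vanishing_near v_partials v_lap v_cont v_nonneg v_bottom r0_pos ball_H segment).
Qed.

Lemma positive_set_open n (H : Rn n -> Prop) (u : Rn n -> R) :
  is_open H -> cont_on (clos H) u -> is_open (fun x => H x /\ u x > 0).
Proof.
move=> H_open u_cont x [Hx ux]; case: (H_open x Hx) => r1 [r1_pos ball1].
case: (u_cont x (clos_self Hx) (u x) ux) => r2 [r2_pos near_ux].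
case: (below_both r1_pos r2_pos) => r [r0 [r_r1 r_r2]].
exists r; split => // y xy.
have Hy : H y by apply: ball1; lra.
have /Rabs_lt_between : Rabs (u y - u x) < u x by apply: near_ux (clos_self Hy) _; lra.
by split => //; lra.
Qed.

Theorem mainTheorem9 (n : nat) (H : Rn n -> Prop) (c u phi : Rn n -> R) :
  smooth_bounded_domain H ->
  (exists M, forall x, H x -> Rabs (c x) <= M) ->
  C2 H u ->
  cont_on (clos H) u ->
  (forall x, boundary H x -> phi x >= 0) ->
  (forall x, boundary H x -> u x = phi x) ->
  (forall x, H x -> u x >= 0) ->
  (forall x, H x -> exists d, DN H phi u x d /\ d + c x * u x >= 0) ->
  (forall x, H x -> u x > 0) \/ (forall x, H x -> u x = 0).
Proof.
move=> [_ [H_open [H_conn [H_bounded _]]]] _ _ u_cont phi_ge _ u_ge DN_ineq.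
have u_nonneg x : H x -> 0 <= u x by move/u_ge; lra.
have phi_nonneg x : boundary H x -> 0 <= phi x by move/phi_ge; lra.
have pos_open := positive_set_open H_open u_cont.
have zero_open := zero_set_open H_open H_bounded u_nonneg phi_nonneg DN_ineq.
case: (H_conn _ _ pos_open zero_open) => [x Hx | x _ [_ ?] [_ ?] | all_pos | all_zero].
- by case: (Rle_lt_or_eq_dec _ _ (u_nonneg x Hx)) => ?; [left | right].
- lra.
- by left => x /all_pos [].
- by right => x /all_zero [].
Qed.
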